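(* Let $G\in\mathbb{R}^{n\times n}$ and $\overline G:=\Pi_{\mathfrak{B}_n}(G)$. Define $\Theta^G\in\mathbb{R}^{n\times n}$ by $\Theta^G_{ij}=1$ if $\overline G_{ij}=0$ and $\Theta^G_{ij}=0$ otherwise, and the linear operator $\Xi:\mathbb{R}^{n\times n}\to\mathbb{R}^{n\times n}$ by $\Xi(H):=H-\Theta^G\circ H$. Then the linear operator $\mathcal{P}:\mathbb{R}^{n\times n}\to\mathbb{R}^{n\times n}$, \[ \mathcal{P}(H):=\Xi(H)-\Xi\mathcal{B}^*(\mathcal{B}\Xi\mathcal{B}^* )^{\dagger}\mathcal{B}\Xi(H),\qquad H\in\mathbb{R}^{n\times n}, \] is the HS-Jacobian of $\Pi_{\mathfrak{B}_n}$ at $G$. Moreover, $\mathcal{P}$ is self-adjoint and positive semidefinite.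
   Context: $\mathfrak{B}_n:=\{X\in\mathbb{R}^{n\times n}\mid Xe=e,\ X^Te=e,\ X\ge0\}$ is the Birkhoff polytope ($e$ the all-ones vector in $\mathbb{R}^n$, $X\ge0$ entrywise), and $\Pi_{\mathfrak{B}_n}$ is the Euclidean (Frobenius-norm) projection onto it. $\circ$ is the Hadamard product. $\mathcal{B}:\mathbb{R}^{n\times n}\to\mathbb{R}^{2n}$, $\mathcal{B}(X):=[(Xe)^T\ (X^Te)^T]^T$, with adjoint $\mathcal{B}^*$ (w.r.t. the trace inner product), so that $\mathfrak{B}_n=\{X\mid \mathcal{B}X=[e^T\ e^T]^T,\ X\ge0\}$. $\dagger$ denotes the Moore–Penrose pseudo-inverse. HS-Jacobian: for a polyhedral set $D=\{x\in\mathbb{R}^N\mid Ax\ge b,\ Bx=d\}$ and a point $x$, with $I(x)=\{i\mid A_i\Pi_D(x)=b_i\}$ the active inequality indices at $\Pi_D(x)$ and $A_{I(x)}$ the corresponding rows of $A$, the HS-Jacobian of $\Pi_D$ at $x$ is $P_0:=I_N-[A_{I(x)}^T\ B^T]\left(\begin{bmatrix}A_{I(x)}\\ B\end{bmatrix}[A_{I(x)}^T\ B^T]\right)^{\dagger}\begin{bmatrix}A_{I(x)}\\ B\end{bmatrix}$. Here this is applied with $\mathbb{R}^{n\times n}\cong\mathbb{R}^{n^2}$, inequality constraints $X\ge 0$ (i.e., $A$ the identity, $b=0$) and equality constraints $\mathcal{B}X=[e^T\ e^T]^T$. *)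

From HB Require Import structures.
From mathcomp Require Import all_boot all_order all_algebra.
From mathcomp Require Import reals.
From Stdlib Require Import ClassicalEpsilon.
Set Implicit Arguments. Unset Strict Implicit. Unset Printing Implicit Defensive.
Import Order.TTheory GRing.Theory Num.Theory.
Local Open Scope ring_scope.

Section Defs.
Variable R : realType.

Definition mdot m p (X Y : 'M[R]_(m, p)) : R := \tr (X^T *m Y).
Definition fnorm2 m p (X : 'M[R]_(m, p)) : R := mdot X X.

Definition is_MP m p (A : 'M[R]_(m, p)) (X : 'M[R]_(p, m)) : Prop :=
  [/\ A *m X *m A = A, X *m A *m X = X, (A *m X)^T = A *m X & (X *m A)^T = X *m A].
Definition pinv m p (A : 'M[R]_(m, p)) : 'M[R]_(p, m) :=
  epsilon (inhabits 0) (is_MP A).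

Definition inD k q N (A : 'M[R]_(k, N)) (b : 'cV[R]_k) (Bc : 'M[R]_(q, N))
  (d : 'cV[R]_q) (x : 'cV[R]_N) : Prop :=
  (forall i, b i 0 <= (A *m x) i 0) /\ Bc *m x = d.
Definition projD k q N (A : 'M[R]_(k, N)) (b : 'cV[R]_k) (Bc : 'M[R]_(q, N))
  (d : 'cV[R]_q) (x : 'cV[R]_N) : 'cV[R]_N :=
  epsilon (inhabits 0) (fun y => inD A b Bc d y /\
    forall z, inD A b Bc d z -> fnorm2 (x - y) <= fnorm2 (x - z)).

Definition active k q N (A : 'M[R]_(k, N)) (b : 'cV[R]_k) (Bc : 'M[R]_(q, N))
  (d : 'cV[R]_q) (x : 'cV[R]_N) : {set 'I_k} :=
  [set i | (A *m projD A b Bc d x) i 0 == b i 0].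
Definition HSjac k q N (A : 'M[R]_(k, N)) (b : 'cV[R]_k) (Bc : 'M[R]_(q, N))
  (d : 'cV[R]_q) (x : 'cV[R]_N) : 'M[R]_N :=
  let I := active A b Bc d x in
  let AI : 'M[R]_(#|I|, N) := rowsub (fun r : 'I_#|I| => enum_val r) A in
  let C := col_mx AI Bc in
  1%:M - C^T *m pinv (C *m C^T) *m C.

Definition vecc n (X : 'M[R]_n) : 'cV[R]_(n * n) := (mxvec X)^T.

Definition Bop n (X : 'M[R]_n) : 'cV[R]_(n + n) :=
  col_mx (X *m const_mx 1) (X^T *m const_mx 1).
Definition Badj n (y : 'cV[R]_(n + n)) : 'M[R]_n :=
  usubmx y *m const_mx 1 + const_mx 1 *m (dsubmx y)^T.
Definition Bmat n : 'M[R]_(n + n, n * n) :=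
  \matrix_(r, l) (Bop (vec_mx (delta_mx 0 l) : 'M[R]_n)) r 0.

Definition birkhoff n (X : 'M[R]_n) : Prop :=
  Bop X = const_mx 1 /\ forall i j, 0 <= X i j.
Definition projB n (G : 'M[R]_n) : 'M[R]_n :=
  epsilon (inhabits 0) (fun Y => birkhoff Y /\
    forall X, birkhoff X -> fnorm2 (G - Y) <= fnorm2 (G - X)).

Definition hadamard n (X Y : 'M[R]_n) : 'M[R]_n := \matrix_(i, j) (X i j * Y i j).

Definition opmx n (L : 'cV[R]_(n + n) -> 'cV[R]_(n + n)) : 'M[R]_(n + n) :=
  \matrix_(r, l) (L (delta_mx l 0)) r 0.

End Defs.

From HB Require Import structures.
From mathcomp Require Import all_boot all_order all_algebra.
From mathcomp Require Import reals.
From mathcomp Require Import ring lra.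
From mathcomp Require boolp classical_sets topology normedtype matrix_normedtype derive.
From Stdlib Require Import ClassicalEpsilon.
Import Order.TTheory GRing.Theory Num.Theory.
Local Open Scope ring_scope.
Set Implicit Arguments. Unset Strict Implicit.

(* Both sides of the first claim are the orthogonal projection onto one subspace.
   For a self-adjoint idempotent E and a map L with adjoint L^*, the operator
   E - E L^* (L E L^* )^+ L E is the orthogonal projection onto {x | E x = x, L x = 0},
   because (L E L^* )(L E L^* )^+ is the identity on the range of L E.  With E = Xi
   and L = B this is P; with E = I and L = C, where C stacks the active rows and the
   equality constraints, it is the HS-Jacobian, and vectorization identifies ker C with
   {X | Xi X = X, B X = 0} since the active entries are the zeros of Pi(G).  Symmetry
   and positive semidefiniteness hold for every orthogonal projection.  Identifying the
   active set needs Pi(G) to exist (the Birkhoff polytope is compact) and to be unique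
   (parallelogram law). *)

Section TraceInnerProduct.
Variable R : realType.
Implicit Types m p : nat.

Lemma mdotE m p (X Y : 'M[R]_(m, p)) : mdot X Y = \sum_i \sum_j X i j * Y i j.
Proof.
rewrite [RHS]exchange_big /mdot /mxtrace; apply: eq_bigr => j _; rewrite mxE.
by apply: eq_bigr => i _; rewrite mxE.
Qed.

Lemma mdotC m p (X Y : 'M[R]_(m, p)) : mdot X Y = mdot Y X.
Proof. by rewrite /mdot -mxtrace_tr trmx_mul trmxK. Qed.

Lemma mdotDr m p (X Y Z : 'M[R]_(m, p)) : mdot X (Y + Z) = mdot X Y + mdot X Z.
Proof. by rewrite /mdot mulmxDr mxtraceD. Qed.

Lemma mdotDl m p (X Y Z : 'M[R]_(m, p)) : mdot (X + Y) Z = mdot X Z + mdot Y Z.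
Proof. by rewrite mdotC mdotDr !(mdotC Z). Qed.

Lemma mdotBr m p (X Y Z : 'M[R]_(m, p)) : mdot X (Y - Z) = mdot X Y - mdot X Z.
Proof. by rewrite /mdot mulmxBr linearB. Qed.

Lemma mdotBl m p (X Y Z : 'M[R]_(m, p)) : mdot (X - Y) Z = mdot X Z - mdot Y Z.
Proof. by rewrite mdotC mdotBr !(mdotC Z). Qed.

Lemma mdot0r m p (X : 'M[R]_(m, p)) : mdot X 0 = 0.
Proof. by rewrite /mdot mulmx0 mxtrace0. Qed.

Lemma mdot0l m p (X : 'M[R]_(m, p)) : mdot 0 X = 0.
Proof. by rewrite mdotC mdot0r. Qed.

Lemma mdot_mulmxr m p k (X : 'M[R]_(m, p)) (A : 'M[R]_(m, k)) (Y : 'M[R]_(k, p)) :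
  mdot X (A *m Y) = mdot (A^T *m X) Y.
Proof. by rewrite /mdot trmx_mul trmxK mulmxA. Qed.

Lemma mdot_mulmxl m p k (A : 'M[R]_(m, k)) (B : 'M[R]_(k, p)) (X : 'M[R]_(m, p)) :
  mdot (A *m B) X = mdot A (X *m B^T).
Proof. by rewrite /mdot trmx_mul -mulmxA mxtrace_mulC -mulmxA. Qed.

Lemma mdot_tr m p (X Y : 'M[R]_(m, p)) : mdot X^T Y^T = mdot X Y.
Proof. by rewrite /mdot trmxK mxtrace_mulC -mxtrace_tr trmx_mul trmxK. Qed.

Lemma mdot_col_mx m1 m2 p (u a : 'M[R]_(m1, p)) (v b : 'M[R]_(m2, p)) :
  mdot (col_mx u v) (col_mx a b) = mdot u a + mdot v b.
Proof. by rewrite /mdot tr_col_mx mul_row_col mxtraceD. Qed.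

Lemma fnorm2E m p (X : 'M[R]_(m, p)) : fnorm2 X = \sum_i \sum_j X i j ^+ 2.
Proof. by rewrite /fnorm2 mdotE; under eq_bigr do under eq_bigr do rewrite -expr2. Qed.

Lemma fnorm2_ge0 m p (X : 'M[R]_(m, p)) : 0 <= fnorm2 X.
Proof. by rewrite fnorm2E; do 2![apply: sumr_ge0 => ? _]; apply: sqr_ge0. Qed.

Lemma fnorm2_eq0 m p (X : 'M[R]_(m, p)) : fnorm2 X = 0 -> X = 0.
Proof.
have row_ge0 i : 0 <= \sum_j X i j ^+ 2 by apply: sumr_ge0 => j _; apply: sqr_ge0.
rewrite fnorm2E => /eqP; rewrite psumr_eq0 // => /allP rows0; apply/matrixP => i j.
move: (rows0 i (mem_index_enum i)); rewrite psumr_eq0 => [|l _]; last exact: sqr_ge0.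
by move=> /allP/(_ j (mem_index_enum j)); rewrite sqrf_eq0 mxE => /eqP.
Qed.

Lemma mulmx_trmx_eq0 m p (A : 'M[R]_(m, p)) : A *m A^T = 0 -> A = 0.
Proof.
move=> AAt0; apply: trmx_inj; rewrite trmx0; apply: fnorm2_eq0.
by rewrite /fnorm2 /mdot trmxK AAt0 mxtrace0.
Qed.

End TraceInnerProduct.

Section PseudoInverse.
Variable R : realType.

Lemma row_free_gram_unit k m (A : 'M[R]_(k, m)) : row_free A -> A *m A^T \in unitmx.
Proof.
rewrite -row_free_unit -!kermx_eq0 => /eqP kerA0; apply/rowV0P => v.
move=> /sub_kermxP; rewrite mulmxA => vAAt0.
have vA0 : v *m A = 0 by apply: mulmx_trmx_eq0; rewrite trmx_mul mulmxA vAAt0 mul0mx.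
by apply/eqP; rewrite -submx0 -kerA0; apply/sub_kermxP.
Qed.

Lemma is_MP_full_rank_factor m r p (F : 'M[R]_(m, r)) (G : 'M[R]_(r, p)) :
  row_free F^T -> row_free G ->
  is_MP (F *m G) (G^T *m invmx (G *m G^T) *m invmx (F^T *m F) *m F^T).
Proof.
move=> /row_free_gram_unit; rewrite trmxK => uF /row_free_gram_unit uG.
set P := invmx (G *m G^T); set Q := invmx (F^T *m F).
have trP : P^T = P by rewrite /P trmx_inv trmx_mul trmxK.
have trQ : Q^T = Q by rewrite /Q trmx_inv trmx_mul trmxK.
have AX : F *m G *m (G^T *m P *m Q *m F^T) = F *m Q *m F^T.
  by rewrite !mulmxA -(mulmxA F G) -(mulmxA F _ P) mulmxV // mulmx1.
have XA : G^T *m P *m Q *m F^T *m (F *m G) = G^T *m P *m G.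
  by rewrite !mulmxA -(mulmxA _ F^T F) -(mulmxA _ Q) mulVmx // mulmx1.
split.
- by rewrite AX !mulmxA -(mulmxA _ F^T F) -(mulmxA F Q) mulVmx // mulmx1.
- by rewrite XA !mulmxA -(mulmxA _ G G^T) -(mulmxA _ (G *m G^T) P) mulmxV // mulmx1.
- by rewrite AX !trmx_mul trmxK trQ mulmxA.
- by rewrite XA !trmx_mul trmxK trP mulmxA.
Qed.

Lemma pinv_is_MP m p (A : 'M[R]_(m, p)) : is_MP A (pinv A).
Proof.
apply: epsilon_spec; rewrite -{1}(mulmx_base A).
eexists; apply: is_MP_full_rank_factor; last exact: row_base_free.
by rewrite /row_free mxrank_tr; apply: col_base_full.
Qed.

Lemma mulmx_pinvK m p (A : 'M[R]_(m, p)) : A *m pinv A *m A = A.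
Proof. by case: (pinv_is_MP A). Qed.

End PseudoInverse.

Section MatrixOfLinearMap.
Variables (R : realType) (k l : nat) (f : {linear 'cV[R]_k -> 'cV[R]_l}).

Lemma mul_mx_lin_col (y : 'cV[R]_k) : (\matrix_(r, c) f (delta_mx c 0) r 0) *m y = f y.
Proof.
apply/colP => r; rewrite {2}[y]matrix_sum_delta linear_sum summxE mxE.
by apply: eq_bigr => c _; rewrite big_ord1 linearZ !mxE mulrC.
Qed.

End MatrixOfLinearMap.

Section OrthogonalProjection.
Variables (R : realType) (m p : nat) (S : 'M[R]_(m, p) -> Prop).

Definition is_orth_proj (x y : 'M[R]_(m, p)) : Prop :=
  S y /\ forall z, S z -> mdot (x - y) z = 0.

Lemma orth_proj_uniq x y1 y2 : (forall z1 z2, S z1 -> S z2 -> S (z1 - z2)) ->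
  is_orth_proj x y1 -> is_orth_proj x y2 -> y1 = y2.
Proof.
move=> S_sub [Sy1 x_y1] [Sy2 x_y2].
have Sy12 := S_sub _ _ Sy1 Sy2.
have y12_eq : (x - y2) - (x - y1) = y1 - y2 by rewrite opprB addrC addrA subrK.
apply/eqP; rewrite -subr_eq0; apply/eqP/fnorm2_eq0.
by rewrite /fnorm2 -{1}y12_eq mdotBl x_y1 // x_y2 // subrr.
Qed.

Variable P : 'M[R]_(m, p) -> 'M[R]_(m, p).
Hypothesis P_orth : forall x, is_orth_proj x (P x).

Lemma orth_proj_mdot x y : mdot x (P y) = mdot (P x) (P y).
Proof.
have [SPy _] := P_orth y; have [_ x_Px] := P_orth x.
by apply/eqP; rewrite -subr_eq0 -mdotBl (x_Px _ SPy).
Qed.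

Lemma orth_proj_sym x y : mdot (P x) y = mdot x (P y).
Proof. by rewrite mdotC orth_proj_mdot mdotC -orth_proj_mdot. Qed.

Lemma orth_proj_psd x : 0 <= mdot (P x) x.
Proof. by rewrite mdotC orth_proj_mdot; apply: fnorm2_ge0. Qed.

End OrthogonalProjection.

Section GramProjection.
Variables (R : realType) (m p k : nat).
Variables (E : {linear 'M[R]_(m, p) -> 'M[R]_(m, p)}) (L : {linear 'M[R]_(m, p) -> 'cV[R]_k}).
Variables (La : 'cV[R]_k -> 'M[R]_(m, p)) (M : 'M[R]_k).
Hypothesis E_sym : forall x y, mdot (E x) y = mdot x (E y).
Hypothesis E_idem : forall x, E (E x) = E x.
Hypothesis La_adj : forall y x, mdot (La y) x = mdot y (L x).
Hypothesis M_gram : forall y, M *m y = L (E (La y)).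

Definition gram_proj x := E x - E (La (pinv M *m L (E x))).

Lemma gram_pinv_range x : M *m pinv M *m L (E x) = L (E x).
Proof.
(* [W M = 0] and [M = (L E) (L E)^*] force [(L E)^* W^T = 0], i.e. [W (L E) = 0]. *)
set W := M *m pinv M - 1%:M.
have WM0 : W *m M = 0 by rewrite mulmxBl mul1mx mulmx_pinvK subrr.
have ELaW0 u : E (La (W^T *m u)) = 0.
  apply: fnorm2_eq0; rewrite /fnorm2 E_sym E_idem La_adj -M_gram.
  by rewrite -mdot_mulmxr !mulmxA WM0 !mul0mx mdot0r.
have WL0 : W *m L (E x) = 0.
  apply: fnorm2_eq0; rewrite /fnorm2 mdot_mulmxr -La_adj -E_sym.
  by rewrite ELaW0 mdot0l.
by apply/eqP; rewrite -subr_eq0; move: WL0; rewrite mulmxBl mul1mx => ->.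
Qed.

Lemma gram_proj_orth x :
  is_orth_proj (fun z => E z = z /\ L z = 0) x (gram_proj x).
Proof.
split=> [|z [Ez Lz]].
  by rewrite /gram_proj !linearB /= !E_idem -M_gram mulmxA gram_pinv_range subrr.
by rewrite mdotBl /gram_proj mdotBl !E_sym Ez La_adj Lz mdot0r subr0 subrr.
Qed.

End GramProjection.

Lemma orth_proj_ker_gram (R : realType) q N (C : 'M[R]_(q, N)) (h : 'cV[R]_N) :
  is_orth_proj (fun z => C *m z = 0) h ((1%:M - C^T *m pinv (C *m C^T) *m C) *m h).
Proof.
have adjC (y : 'cV_q) (x : 'cV_N) : mdot (C^T *m y) x = mdot y (C *m x).
  by rewrite mdot_mulmxr.
have gramC (y : 'cV_q) : C *m C^T *m y = C *m (C^T *m y) by rewrite mulmxA.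
have [[_ Cp] p_orth] :=
  gram_proj_orth (E := idfun) (fun _ _ => erefl) (fun _ => erefl) adjC gramC h.
have -> : (1%:M - C^T *m pinv (C *m C^T) *m C) *m h =
          gram_proj idfun (mulmx C) (mulmx C^T) (C *m C^T) h.
  by rewrite /gram_proj /= mulmxBl mul1mx !mulmxA.
by split=> // z Cz; apply: p_orth.
Qed.

Lemma HSjac_orth (R : realType) k q N (A : 'M[R]_(k, N)) (b : 'cV[R]_k)
    (Bc : 'M[R]_(q, N)) (d : 'cV[R]_q) (x h : 'cV[R]_N) :
  let I := active A b Bc d x in
  let C := col_mx (rowsub (fun r : 'I_#|I| => enum_val r) A) Bc in
  is_orth_proj (fun z => C *m z = 0) h (HSjac A b Bc d x *m h).
Proof. move=> I C; exact: orth_proj_ker_gram. Qed.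

Lemma rowsub_enum_eq0 (R : realType) N (I : {set 'I_N}) (z : 'cV[R]_N) :
  rowsub (fun r : 'I_#|I| => enum_val r) z = 0 <-> forall k, k \in I -> z k 0 = 0.
Proof.
split=> [z0 k kI | z0].
  by have /matrixP/(_ (enum_rank_in kI k) 0) := z0; rewrite !mxE enum_rankK_in.
by apply/matrixP => r c; rewrite !mxE (ord1 c); apply: z0; apply: enum_valP.
Qed.

Section NearestPoint.
Variables (R : realType) (m p : nat).
Implicit Types (K : 'M[R]_(m, p) -> Prop) (g y U V : 'M[R]_(m, p)).

Definition is_nearest K g y := K y /\ forall z, K z -> fnorm2 (g - y) <= fnorm2 (g - z).

Lemma fnorm2Z (a : R) U : fnorm2 (a *: U) = a ^+ 2 * fnorm2 U.
Proof.
by rewrite /fnorm2 /mdot -scalemxAr mxtraceZ linearZ /= -scalemxAl mxtraceZ mulrA -expr2.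
Qed.

Lemma fnorm2_parallelogram U V :
  fnorm2 (U + V) + fnorm2 (U - V) = (fnorm2 U + fnorm2 V) * 2.
Proof. by rewrite /fnorm2 mdotBl !mdotBr mdotDl !mdotDr (mdotC V U); ring. Qed.

Lemma is_nearest_uniq K g y1 y2 :
  (forall U V, K U -> K V -> K (2^-1 *: (U + V))) ->
  is_nearest K g y1 -> is_nearest K g y2 -> y1 = y2.
Proof.
move=> K_mid [Ky1 y1_min] [Ky2 y2_min].
have g_mid : g - 2^-1 *: (y1 + y2) = 2^-1 *: ((g - y1) + (g - y2)).
  by apply/matrixP => i j; rewrite !mxE; field.
have y12 : (g - y1) - (g - y2) = y2 - y1 by rewrite opprB addrC addrA subrK.
have le12 := y1_min _ Ky2; have le21 := y2_min _ Ky1.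
have le_mid := y1_min _ (K_mid _ _ Ky1 Ky2); rewrite g_mid fnorm2Z in le_mid.
have parallelogram := fnorm2_parallelogram (g - y1) (g - y2); rewrite y12 in parallelogram.
have dist_ge0 := fnorm2_ge0 (y2 - y1).
have /fnorm2_eq0/eqP : fnorm2 (y2 - y1) = 0 by lra.
by rewrite subr_eq0 => /eqP.
Qed.

End NearestPoint.

Section BirkhoffOperators.
Variables (R : realType) (n : nat).
Implicit Types (X Y H : 'M[R]_n) (y : 'cV[R]_(n + n)).

Fact Bop_is_linear : linear (@Bop R n).
Proof.
move=> a X Y.
by rewrite /Bop linearD linearZ /= !mulmxDl -!scalemxAl scale_col_mx add_col_mx.
Qed.
HB.instance Definition _ := GRing.isLinear.Build R 'M[R]_n 'cV[R]_(n + n) _ (@Bop R n)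
  Bop_is_linear.

Fact Badj_is_linear : linear (@Badj R n).
Proof. by move=> a y z; rewrite /Badj !linearD !linearZ /= mulmxDl -scalemxAl addrACA. Qed.
HB.instance Definition _ := GRing.isLinear.Build R 'cV[R]_(n + n) 'M[R]_n _ (@Badj R n)
  Badj_is_linear.

Lemma Badj_adjoint y X : mdot (Badj y) X = mdot y (Bop X).
Proof.
have row_sums : mdot (usubmx y *m const_mx 1) X = mdot (usubmx y) (X *m const_mx 1).
  by rewrite mdot_mulmxl trmx_const.
have col_sums : mdot (const_mx 1 *m (dsubmx y)^T) X = mdot (dsubmx y) (X^T *m const_mx 1).
  rewrite mdotC mdot_mulmxr -[_ *m X]trmxK mdot_tr.
  by rewrite trmx_mul trmxK mdotC.
by rewrite /Badj mdotDl row_sums col_sums -[in RHS](vsubmxK y) mdot_col_mx.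
Qed.

Definition zero_pattern Y : 'M[R]_n := \matrix_(i, j) (if Y i j == 0 then 1 else 0).
Definition supp_restrict Y H : 'M[R]_n := H - hadamard (zero_pattern Y) H.

Lemma supp_restrictE Y H :
  supp_restrict Y H = \matrix_(i, j) (if Y i j == 0 then 0 else H i j).
Proof.
by apply/matrixP => i j; rewrite !mxE; case: eqP => _; rewrite ?mul1r ?mul0r ?subrr ?subr0.
Qed.

Fact supp_restrict_is_linear Y : linear (supp_restrict Y).
Proof.
move=> a H K; apply/matrixP => i j; rewrite !supp_restrictE !mxE.
by case: eqP; rewrite ?mulr0 ?addr0.
Qed.
HB.instance Definition _ Y := GRing.isLinear.Build R 'M[R]_n 'M[R]_n _ (supp_restrict Y)
  (supp_restrict_is_linear Y).

Lemma supp_restrict_idem Y H : supp_restrict Y (supp_restrict Y H) = supp_restrict Y H.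
Proof. by apply/matrixP => i j; rewrite !supp_restrictE !mxE; case: eqP. Qed.

Lemma supp_restrict_sym Y H K : mdot (supp_restrict Y H) K = mdot H (supp_restrict Y K).
Proof.
rewrite !mdotE; apply: eq_bigr => i _; apply: eq_bigr => j _.
by rewrite !supp_restrictE !mxE; case: eqP; rewrite ?mul0r ?mulr0.
Qed.

Lemma supp_restrict_fixed Y X :
  supp_restrict Y X = X <-> forall i j, Y i j = 0 -> X i j = 0.
Proof.
rewrite supp_restrictE; split=> [XE i j /eqP Yij0 | X0].
  by rewrite -XE mxE Yij0.
by apply/matrixP => i j; rewrite mxE; case: eqP => // /X0 ->.
Qed.

Lemma mul_gram_opmx Y y :
  opmx (fun z => Bop (supp_restrict Y (Badj z))) *m y = Bop (supp_restrict Y (Badj y)).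
Proof. exact: (mul_mx_lin_col (@Bop R n \o supp_restrict Y \o @Badj R n)). Qed.

End BirkhoffOperators.

Section Vectorization.
Variables (R : realType) (n : nat).
Implicit Types (X Y H : 'M[R]_n) (z : 'cV[R]_(n * n)).

Lemma mdot_mxvec X Y : mdot (mxvec X) (mxvec Y) = mdot X Y.
Proof.
rewrite !mdotE big_ord1 (reindex _ (curry_mxvec_bij _ _)) /= pair_bigA /=.
by apply: eq_bigr => -[i j] _ /=; rewrite !mxvecE.
Qed.

Lemma mdot_vecc X Y : mdot (vecc X) (vecc Y) = mdot X Y.
Proof. by rewrite /vecc mdot_tr mdot_mxvec. Qed.

Lemma veccE X i j : vecc X (mxvec_index i j) 0 = X i j.
Proof. by rewrite /vecc mxE mxvecE. Qed.

Lemma vecc_vec_mx z : vecc (vec_mx z^T) = z.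
Proof. by rewrite /vecc vec_mxK trmxK. Qed.

Lemma veccB X Y : vecc (X - Y) = vecc X - vecc Y.
Proof. by rewrite /vecc !linearB. Qed.

Lemma Bmat_vecc X : Bmat R n *m vecc X = Bop X.
Proof.
have -> : Bmat R n = \matrix_(r, l) (@Bop R n \o vec_mx \o trmx) (delta_mx l 0) r 0.
  by apply/matrixP => r l; rewrite !mxE /= trmx_delta.
by rewrite mul_mx_lin_col /= /vecc trmxK mxvecK.
Qed.

Lemma orth_proj_vecc (S : 'M[R]_n -> Prop) (S' : 'cV[R]_(n * n) -> Prop) H P :
  (forall X, S' (vecc X) <-> S X) -> is_orth_proj S H P -> is_orth_proj S' (vecc H) (vecc P).
Proof.
move=> SS' [SP H_P]; split=> [|z]; first exact/SS'.
by rewrite -(vecc_vec_mx z) -veccB mdot_vecc => /SS'; apply: H_P.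
Qed.

End Vectorization.

Section BirkhoffPolytope.
Variables (R : realType) (n : nat).
Implicit Types (X Y : 'M[R]_n).

Lemma Bop_row X i : Bop X (lshift n i) 0 = \sum_j X i j.
Proof. by rewrite /Bop col_mxEu mxE; apply: eq_bigr => j _; rewrite mxE mulr1. Qed.

Lemma birkhoff_le1 X i j : birkhoff X -> X i j <= 1.
Proof.
move=> [BX X_ge0]; have := Bop_row X i; rewrite BX mxE (bigD1 j) //= => ->.
by rewrite lerDl; apply: sumr_ge0.
Qed.

Lemma birkhoff1 : birkhoff (1%:M : 'M[R]_n).
Proof.
split; first by rewrite /Bop trmx1 !mul1mx col_mx_const.
by move=> i j; rewrite mxE ler0n.
Qed.

Lemma birkhoff_midpoint X Y : birkhoff X -> birkhoff Y -> birkhoff (2^-1 *: (X + Y)).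
Proof.
move=> [BX X_ge0] [BY Y_ge0]; split => [|i j].
  by rewrite linearZ linearD /= BX BY -mulr2n -scaler_nat scalerA mulVf ?pnatr_eq0 ?scale1r.
by rewrite !mxE mulr_ge0 ?addr_ge0 ?invr_ge0 ?ler0n.
Qed.

Lemma inD_vecc X : inD (1%:M : 'M[R]_(n * n)) 0 (Bmat R n) (const_mx 1) (vecc X) <-> birkhoff X.
Proof.
rewrite /inD /birkhoff Bmat_vecc mul1mx; split=> -[X_ge0 BX]; split=> //.
  by move=> i j; have := X_ge0 (mxvec_index i j); rewrite veccE mxE.
by move=> k; case/mxvec_indexP: k => i j; rewrite veccE mxE.
Qed.

Lemma birkhoff_vec_mxE (v : 'rV[R]_(n * n)) : birkhoff (vec_mx v) <->
  (forall r, \sum_l Bmat R n r l * v 0 l = 1) /\ (forall k, 0 <= v 0 k).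
Proof.
have Bmat_v r : (Bmat R n *m v^T) r 0 = \sum_l Bmat R n r l * v 0 l.
  by rewrite [LHS]mxE; apply: eq_bigr => l _; rewrite [v^T _ _]mxE.
rewrite -inD_vecc /vecc vec_mxK /inD mul1mx.
split=> [[v_ge0 Bv] | [Bv v_ge0]]; split=> [r | ].
- by rewrite -Bmat_v Bv mxE.
- by move=> k; have := v_ge0 k; rewrite !mxE.
- by have := v_ge0 r; rewrite !mxE.
- by apply/colP => r; rewrite Bmat_v Bv mxE.
Qed.

End BirkhoffPolytope.

Section NearestPointExistence.
Import boolp classical_sets topology normedtype matrix_normedtype derive.
Import numFieldNormedType.Exports.
Local Open Scope classical_set_scope.
Variable R : realType.

Lemma fnorm2_sub_continuous m p (g : 'M[R]_(m, p)) :
  continuous (fun y : 'M[R]_(m, p) => fnorm2 (g - y)).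
Proof.
have -> : (fun y : 'M[R]_(m, p) => fnorm2 (g - y)) =
          fun y => \sum_i \sum_j (g i j - y i j) * (g i j - y i j).
  by apply: funext => y; rewrite /fnorm2 mdotE; do 2![apply: eq_bigr => ? _]; rewrite !mxE.
apply: (continuous_big (@add_continuous R)) => i _.
apply: (continuous_big (@add_continuous R)) => j _.
have gy_cont : continuous (fun y : 'M[R]_(m, p) => g i j - y i j).
  by move=> y; apply: continuousB; [exact: cst_continuous | exact: coord_continuous].
by move=> y; exact: (continuousM (gy_cont y) (gy_cont y)).
Qed.

Lemma nearest_exists m p (K : set 'M[R]_(m, p)) g :
  K !=set0 -> compact K -> exists y, is_nearest K g y.
Proof.
move=> K0 K_compact.
have [|y Ky y_min] :=
  compact_EVT_min K0 K_compact (f := fun y : 'M[R]_(m, p) => fnorm2 (g - y)).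
  by apply: continuous_subspaceT; apply: fnorm2_sub_continuous.
by exists y; split=> [|z Kz]; [rewrite inE in Ky | apply: y_min; rewrite inE].
Qed.

Lemma birkhoff_vec_closed n : closed [set v : 'rV[R]_(n * n) | birkhoff (vec_mx v)].
Proof.
have -> : [set v : 'rV[R]_(n * n) | birkhoff (vec_mx v)] =
    \bigcap_r [set v : 'rV[R]_(n * n) | \sum_l Bmat R n r l * v 0 l = 1] `&`
    \bigcap_k [set v : 'rV[R]_(n * n) | 0 <= v 0 k].
  apply/seteqP; split=> v /=; rewrite birkhoff_vec_mxE => -[Bv v_ge0].
    by split=> [r _ | k _]; [apply: Bv | apply: v_ge0].
  by split=> [r | k]; [apply: (Bv r I) | apply: (v_ge0 k I)].
apply: closedI; apply: closed_bigI => i _.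
- apply: (@preimage_closed _ R (fun v : 'rV[R]_(n * n) => \sum_l Bmat R n i l * v 0 l)
    [set x | x = 1]); last exact: closed_eq.
  move=> v _; apply: (continuous_big (@add_continuous R)) => l _ w.
  by apply: continuousM; [exact: cst_continuous | exact: coord_continuous].
- apply: (@preimage_closed _ R (fun v : 'rV[R]_(n * n) => v 0 i) [set x | 0 <= x]).
    by move=> v _; apply: coord_continuous.
  exact: closed_ge.
Qed.

Lemma birkhoff_vec_compact n : compact [set v : 'rV[R]_(n * n) | birkhoff (vec_mx v)].
Proof.
have box_compact :=
  @rV_compact R (n * n) (fun=> `[0, 1]%classic) (fun=> @segment_compact R 0 1).
apply: (subclosed_compact (@birkhoff_vec_closed n) box_compact) => v Bv k /=.
case/mxvec_indexP: k => i j.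
have [_ v_ge0] := Bv; have := birkhoff_le1 i j Bv; have := v_ge0 i j.
by rewrite in_itv !mxE /= => -> ->.
Qed.

Lemma birkhoff_nearest_exists n (G : 'M[R]_n) : exists Y, is_nearest (@birkhoff R n) G Y.
Proof.
have [|v [Bv v_min]] := nearest_exists (mxvec G) _ (@birkhoff_vec_compact n).
  by exists (mxvec 1%:M); rewrite /= mxvecK; apply: birkhoff1.
have dist_mxvec X : fnorm2 (mxvec G - mxvec X) = fnorm2 (G - X).
  by rewrite [RHS]/fnorm2 -mdot_mxvec linearB.
exists (vec_mx v); split=> // X BX.
by rewrite -dist_mxvec vec_mxK -dist_mxvec; apply: v_min; rewrite /= mxvecK.
Qed.

End NearestPointExistence.

Section BirkhoffProjection.
Variables (R : realType) (n : nat) (G : 'M[R]_n).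

Lemma projB_nearest : is_nearest (@birkhoff R n) G (projB G).
Proof. by have [Y Y_nearest] := birkhoff_nearest_exists G; apply: epsilon_spec; exists Y. Qed.

Lemma projD_vecc :
  projD (1%:M : 'M[R]_(n * n)) 0 (Bmat R n) (const_mx 1) (vecc G) = vecc (projB G).
Proof.
set D := inD (1%:M : 'M[R]_(n * n)) 0 (Bmat R n) (const_mx 1).
have dist_vecc X Y : fnorm2 (vecc X - vecc Y) = fnorm2 (X - Y).
  by rewrite -veccB /fnorm2 mdot_vecc.
have nearest_vecc Y : is_nearest D (vecc G) (vecc Y) <-> is_nearest (@birkhoff R n) G Y.
  rewrite /is_nearest /D inD_vecc; split=> -[BY Y_min]; split=> //.
    by move=> X BX; rewrite -!dist_vecc; apply: Y_min; apply/inD_vecc.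
  by move=> z; rewrite -(vecc_vec_mx z) inD_vecc !dist_vecc; apply: Y_min.
have : is_nearest D (vecc G) (projD 1%:M 0 (Bmat R n) (const_mx 1) (vecc G)).
  by apply: epsilon_spec; exists (vecc (projB G)); apply/nearest_vecc/projB_nearest.
rewrite -[projD _ _ _ _ _]vecc_vec_mx => /nearest_vecc y_nearest.
by rewrite (is_nearest_uniq (@birkhoff_midpoint R n) y_nearest projB_nearest).
Qed.

Lemma active_vecc i j :
  (mxvec_index i j \in active (1%:M : 'M[R]_(n * n)) 0 (Bmat R n) (const_mx 1) (vecc G))
  = (projB G i j == 0).
Proof. by rewrite inE mul1mx projD_vecc veccE mxE. Qed.

End BirkhoffProjection.

Lemma HSjac_ker_vecc (R : realType) n (G X : 'M[R]_n) :
  let I := active (1%:M : 'M[R]_(n * n)) 0 (Bmat R n) (const_mx 1) (vecc G) in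
  let C := col_mx (rowsub (fun r : 'I_#|I| => enum_val r) 1%:M) (Bmat R n) in
  C *m vecc X = 0 <-> supp_restrict (projB G) X = X /\ Bop X = 0.
Proof.
move=> I C; rewrite supp_restrict_fixed /C mul_col_mx mul_rowsub_mx mul1mx Bmat_vecc.
split=> [/eqP | [X0 BX0]].
  rewrite col_mx_eq0 => /andP[/eqP/rowsub_enum_eq0 X0 /eqP BX0]; split=> // i j /eqP.
  by rewrite -active_vecc => /X0; rewrite veccE.
rewrite BX0 (proj2 (rowsub_enum_eq0 _ _)) ?col_mx0 //.
by move=> k; case/mxvec_indexP: k => i j; rewrite active_vecc veccE => /eqP /X0.
Qed.

Theorem proposition3p1 (R : realType) (n : nat) (G : 'M[R]_n) :
  let Gb := projB G in
  let Theta : 'M[R]_n := \matrix_(i, j) (if Gb i j == 0 then 1 else 0) in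
  let Xi := fun H : 'M[R]_n => H - hadamard Theta H in
  let BXiBs := opmx (fun y : 'cV[R]_(n + n) => Bop (Xi (Badj y))) in
  let P := fun H : 'M[R]_n => Xi H - Xi (Badj (pinv BXiBs *m Bop (Xi H))) in
  (forall H : 'M[R]_n,
     vecc (P H) = HSjac (1%:M : 'M[R]_(n * n)) 0 (Bmat R n) (const_mx 1) (vecc G)
                  *m vecc H)
  /\ (forall H K : 'M[R]_n, mdot (P H) K = mdot H (P K))
  /\ (forall H : 'M[R]_n, 0 <= mdot (P H) H).
Proof.
move=> Gb Theta Xi BXiBs P.
have P_orth H : is_orth_proj (fun X => supp_restrict Gb X = X /\ Bop X = 0) H (P H).
  exact: (gram_proj_orth (@supp_restrict_sym R n Gb) (supp_restrict_idem Gb)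
            (@Badj_adjoint R n) (mul_gram_opmx Gb)).
split; [|split]; [|exact: orth_proj_sym P_orth|exact: orth_proj_psd P_orth].
move=> H; apply: orth_proj_uniq
  (orth_proj_vecc (HSjac_ker_vecc G) (P_orth H)) (HSjac_orth _ _ _ _ _ _).
by move=> z1 z2 Cz1 Cz2; rewrite mulmxBr Cz1 Cz2 subrr.
Qed.
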